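(* Let $V$ be a finite set and let $A$ be a real symmetric matrix indexed by $V$ that has a perfect elimination ordering, and let $v\in V$. Then $v$ is simplicial in $A$ if and only if there exists a perfect elimination ordering of $A$ having $v$ as its first element.
   Context: A perfect elimination ordering of $A$ is a linear order $\pi$ of $V$ with $A_{yz}\ge\min\{A_{xy},A_{xz}\}$ for all $x,y,z\in V$ with $x<_\pi y<_\pi z$. An element $v$ is simplicial in $A$ if $A_{yz}\ge\min\{A_{vy},A_{vz}\}$ for all distinct $y,z\in V\setminus\{v\}$. *)

From mathcomp Require Import all_boot all_order all_algebra.
From mathcomp Require Import reals.
Set Implicit Arguments. Unset Strict Implicit. Unset Printing Implicit Defensive.
Import Order.TTheory GRing.Theory Num.Theory.
Local Open Scope ring_scope.

Definition symmetric_mx (R : realType) (V : finType) (A : V -> V -> R) : Prop :=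
  forall x y, A x y = A y x.

(* A linear order pi of V is represented by a sequence listing every element
   of V exactly once; x <_pi y iff x occurs before y in the sequence. *)
Definition linear_order (V : finType) (pi : seq V) : Prop :=
  perm_eq pi (enum V).

Definition ltpi (V : finType) (pi : seq V) (x y : V) : bool :=
  (index x pi < index y pi)%N.

Definition is_peo (R : realType) (V : finType) (A : V -> V -> R) (pi : seq V)
  : Prop :=
  linear_order pi /\
  forall x y z : V, ltpi pi x y -> ltpi pi y z ->
    Num.min (A x y) (A x z) <= A y z.

Definition has_peo (R : realType) (V : finType) (A : V -> V -> R) : Prop :=
  exists pi, is_peo A pi.

Definition simplicial (R : realType) (V : finType) (A : V -> V -> R) (v : V)
  : Prop :=
  forall y z : V, y != v -> z != v -> y != z ->
    Num.min (A v y) (A v z) <= A y z.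

(* A vertex listed first in a perfect elimination ordering is simplicial: any
   two other vertices come after it, and by symmetry of A we may assume they
   occur in increasing order.  Conversely, moving a simplicial vertex v to the
   front of a perfect elimination ordering keeps it one: triples avoiding v
   keep their relative order, and triples starting at v are exactly what
   simpliciality controls. *)

From mathcomp Require Import all_boot all_order all_algebra.
From mathcomp Require Import reals.
Set Implicit Arguments. Unset Strict Implicit. Unset Printing Implicit Defensive.
Import Order.TTheory GRing.Theory Num.Theory.
Local Open Scope ring_scope.

Section Precedence.

Variable V : finType.
Implicit Types (s : seq V) (v x y : V).

Lemma ltpi_neq s x y : ltpi s x y -> x != y.
Proof. by apply: contraTneq => ->; rewrite /ltpi ltnn. Qed.

Lemma ltpi_head s v w : w != v -> ltpi (v :: s) v w.
Proof. by move=> wv; rewrite /ltpi /= eqxx eq_sym (negbTE wv). Qed.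

Lemma ltpiN_head s v x : ~~ ltpi (v :: s) x v.
Proof. by rewrite /ltpi /= eqxx. Qed.

Lemma ltpi_cons s v x y :
  x != v -> y != v -> ltpi (v :: s) x y = ltpi s x y.
Proof. by move=> xv yv; rewrite /ltpi /= !(eq_sym v) (negbTE xv) (negbTE yv). Qed.

Lemma ltpi_rem s v x y : x != v -> y != v -> ltpi (rem v s) x y = ltpi s x y.
Proof.
move=> xv yv; elim: s => //= a s IHs.
have [->|av] := eqVneq a v; first by rewrite ltpi_cons.
by move: IHs; rewrite /ltpi /=; case: (a == x); case: (a == y).
Qed.

Lemma ltpi_total s x y : linear_order s -> x != y -> ltpi s x y || ltpi s y x.
Proof.
move=> Ls; rewrite /ltpi -neq_ltn; apply: contra_neq => eq_idx.
by rewrite -(nth_index x (_ : x \in s)) ?eq_idx ?nth_index ?(perm_mem Ls) ?mem_enum.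
Qed.

End Precedence.

Section PerfectElimination.

Variables (R : realType) (V : finType) (A : V -> V -> R).

Lemma peo_head_simplicial v s :
  symmetric_mx A -> is_peo A (v :: s) -> simplicial A v.
Proof.
move=> Asym [Ls Ps] y z yv zv yz.
have [lt_yz | lt_zy] := orP (ltpi_total Ls yz).
- exact: Ps (ltpi_head _ yv) lt_yz.
- by rewrite minC (Asym y z); apply: Ps (ltpi_head _ zv) lt_zy.
Qed.

Lemma peo_simplicial_to_front v s :
  simplicial A v -> is_peo A s -> is_peo A (v :: rem v s).
Proof.
move=> Sv [Ls Ps]; split.
  have vs : v \in s by rewrite (perm_mem Ls) mem_enum.
  by apply: perm_trans Ls; rewrite perm_sym perm_to_rem.
move=> x y z lt_xy lt_yz.
have yv : y != v by apply: contraTneq lt_xy => ->; apply: ltpiN_head.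
have zv : z != v by apply: contraTneq lt_yz => ->; apply: ltpiN_head.
have [->|xv] := eqVneq x v; first exact: Sv (ltpi_neq lt_yz).
by move: lt_xy lt_yz; rewrite !ltpi_cons // !ltpi_rem //; apply: Ps.
Qed.

End PerfectElimination.

Theorem lemma2 (R : realType) (V : finType) (A : V -> V -> R) (v : V) :
  symmetric_mx A -> has_peo A ->
  (simplicial A v <-> exists pi : seq V, is_peo A pi /\ head v pi = v).
Proof.
move=> Asym [sigma Psigma]; split.
  by move=> Sv; exists (v :: rem v sigma); split => //; apply: peo_simplicial_to_front.
case=> -[|a pi] [Ppi /= a_v]; last by rewrite a_v in Ppi; apply: peo_head_simplicial Ppi.
by have := perm_mem Ppi.1 v; rewrite mem_enum in_nil.
Qed.
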